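(* Every circuit $c$ of $\mathsf{ACirc}$ is equivalent (equal in AIH, equivalently having the same denotation) to a circuit containing precisely one occurrence of $\mathbf 1$ and no occurrence of $\mathbf 1^{op}$.
   Context: Fix a field $k$. Circuits: terms built from generators with sorts $(n,m)$: copier $\Delta:(1,2)$, discard $!:(1,0)$, amplifier $\mathsf{s}_r:(1,1)$ ($r\in k$), register $\mathsf{x}:(1,1)$, adder $+:(2,1)$, zero $0:(0,1)$, one $\mathbf{1}:(0,1)$; mirror images $\Delta^{op}:(2,1)$, $!^{op}:(0,1)$, $\mathsf{s}_r^{op}$, $\mathsf{x}^{op}:(1,1)$, $+^{op}:(1,2)$, $0^{op}:(1,0)$, $\mathbf{1}^{op}:(1,0)$; $\mathrm{id}_0:(0,0),\mathrm{id}_1:(1,1),\mathrm{sw}:(2,2)$; closed under $;$ and $\oplus$; $\mathsf{ACirc}$ is the resulting prop. Denotation over the field $k(x)$ of polynomial fractions: $[\![\Delta]\!]=\{(p,(p,p))\}$, $[\![!]\!]=\{(p,\bullet)\}$, $[\![+]\!]=\{((p,q),p+q)\}$, $[\![0]\!]=\{(\bullet,0)\}$, $[\![\mathbf 1]\!]=\{(\bullet,1)\}$, $[\![\mathsf s_r]\!]=\{(p,rp)\}$, $[\![\mathsf x]\!]=\{(p,px)\}$; mirrored generators denote converse relations; structural ones identity, swap, $\{(\bullet,\bullet)\}$; $;$ relational composition, $\oplus$ product. AIH is the equational theory of Affine Interacting Hopf Algebras, sound and complete for this semantics. *)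

From HB Require Import structures.
From mathcomp Require Import all_boot all_order all_algebra.
Set Implicit Arguments.
Unset Strict Implicit.
Unset Printing Implicit Defensive.
Import GRing.Theory.
Local Open Scope ring_scope.

Definition kx (k : fieldType) := {fraction {poly k}}.
Definition polyfrac (k : fieldType) (p : {poly k}) : kx k := FracField.tofrac p.
Definition xfrac (k : fieldType) : kx k := polyfrac 'X.
Definition cst (k : fieldType) (r : k) : kx k := polyfrac r%:P.

Inductive gen (k : fieldType) : nat -> nat -> Type :=
| g_copy : gen k 1 2
| g_discard : gen k 1 0
| g_amp : k -> gen k 1 1
| g_reg : gen k 1 1
| g_add : gen k 2 1
| g_zero : gen k 0 1
| g_one : gen k 0 1.

(* Circuits: terms of ACirc. [c_op g] is the mirror image of [g]. *)
Inductive circ (k : fieldType) : nat -> nat -> Type :=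
| c_gen : forall n m, gen k n m -> circ k n m
| c_op : forall n m, gen k n m -> circ k m n
| c_id0 : circ k 0 0
| c_id1 : circ k 1 1
| c_sw : circ k 2 2
| c_seq : forall n m l, circ k n m -> circ k m l -> circ k n l
| c_par : forall n1 m1 n2 m2, circ k n1 m1 -> circ k n2 m2 ->
    circ k (n1 + n2)%N (m1 + m2)%N.

Definition is_one (k : fieldType) n m (g : gen k n m) : bool :=
  match g with g_one => true | _ => false end.

Fixpoint count_one (k : fieldType) n m (c : circ k n m) : nat :=
  match c with
  | c_gen _ _ g => is_one g
  | c_seq _ _ _ c1 c2 => (count_one c1 + count_one c2)%N
  | c_par _ _ _ _ c1 c2 => (count_one c1 + count_one c2)%N
  | _ => 0%N
  end.

Fixpoint count_one_op (k : fieldType) n m (c : circ k n m) : nat :=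
  match c with
  | c_op _ _ g => is_one g
  | c_seq _ _ _ c1 c2 => (count_one_op c1 + count_one_op c2)%N
  | c_par _ _ _ _ c1 c2 => (count_one_op c1 + count_one_op c2)%N
  | _ => 0%N
  end.

Definition rel (k : fieldType) n m := 'rV[kx k]_n -> 'rV[kx k]_m -> Prop.

Definition sem_gen (k : fieldType) n m (g : gen k n m) : rel k n m :=
  match g in gen _ n m return rel k n m with
  | g_copy => fun u v => v ord0 ord0 = u ord0 ord0 /\ v ord0 ord_max = u ord0 ord0
  | g_discard => fun _ _ => True
  | g_amp r => fun u v => v ord0 ord0 = cst r * u ord0 ord0
  | g_reg => fun u v => v ord0 ord0 = u ord0 ord0 * xfrac k
  | g_add => fun u v => v ord0 ord0 = u ord0 ord0 + u ord0 ord_max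
  | g_zero => fun _ v => v ord0 ord0 = 0
  | g_one => fun _ v => v ord0 ord0 = 1
  end.

Fixpoint sem (k : fieldType) n m (c : circ k n m) : rel k n m :=
  match c in circ _ n m return rel k n m with
  | c_gen _ _ g => sem_gen g
  | c_op _ _ g => fun u v => sem_gen g v u
  | c_id0 => fun u v => u = v
  | c_id1 => fun u v => u = v
  | c_sw => fun u v => v ord0 ord0 = u ord0 ord_max /\ v ord0 ord_max = u ord0 ord0
  | c_seq _ _ _ c1 c2 => fun u w => exists v, sem c1 u v /\ sem c2 v w
  | c_par _ _ _ _ c1 c2 => fun u v =>
      sem c1 (lsubmx u) (lsubmx v) /\ sem c2 (rsubmx u) (rsubmx v)
  end.

From mathcomp Require Import all_boot all_order all_algebra.
From Stdlib Require Import Setoid.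

(* Thread an extra wire carrying the constant 1 through the whole circuit.
   Every occurrence of 1 becomes a copier tapping that wire, every occurrence
   of 1^op a co-copier that matches its input against the wire, and every other
   component passes the wire along untouched (crossings route it around the
   left block of a parallel composition).  Feeding the wire with a single 1 and
   discarding it at the end yields an equivalent circuit. *)

Set Implicit Arguments.
Unset Strict Implicit.
Local Open Scope ring_scope.

Section OneWire.
Variable k : fieldType.
Local Notation vec n := 'rV[kx k]_n.

Definition one : vec 1 := const_mx 1.

Lemma one_ord0 : one ord0 ord0 = 1.
Proof. by rewrite mxE. Qed.

Lemma row_mxA1 n1 n2 (a : vec 1) (x : vec n1) (y : vec n2) :
  row_mx a (row_mx x y) = row_mx (row_mx a x) y :> vec (1 + (n1 + n2)).
Proof. by have := @row_mxA _ _ _ _ _ a x y; rewrite /= castmx_id. Qed.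

Lemma rv1P (a b : vec 1) : a = b <-> a ord0 ord0 = b ord0 ord0.
Proof. by split=> [-> // | eq_ab]; apply/matrixP => i j; rewrite !ord1. Qed.

Lemma row_mx_ord0 n (a : vec 1) (x : vec n) :
  (row_mx a x : vec n.+1) ord0 ord0 = a ord0 ord0.
Proof. by rewrite -(row_mxEl a x ord0 ord0); congr (row_mx _ _ _ _); exact: val_inj. Qed.

Lemma row_mx_ord_max (a b : vec 1) : (row_mx a b : vec 2) ord0 ord_max = b ord0 ord0.
Proof. by rewrite -(row_mxEr a b ord0 ord0); congr (row_mx _ _ _ _); exact: val_inj. Qed.

Lemma rv2P (w : vec 2) (a b : vec 1) :
  w = row_mx a b <-> w ord0 ord0 = a ord0 ord0 /\ w ord0 ord_max = b ord0 ord0.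
Proof.
split=> [-> | [wa wb]]; first by rewrite row_mx_ord0 row_mx_ord_max.
apply/matrixP => i [[|[|//]] lt_j2]; rewrite (ord1 i).
- by rewrite (_ : Ordinal lt_j2 = ord0) ?wa ?row_mx_ord0 //; exact: val_inj.
- by rewrite (_ : Ordinal lt_j2 = ord_max) ?wb ?row_mx_ord_max //; exact: val_inj.
Qed.

Fixpoint id_circ n : circ k n n :=
  match n with 0 => c_id0 k | n'.+1 => c_par (c_id1 k) (id_circ n') end.

Fixpoint mirror n m (c : circ k n m) : circ k m n :=
  match c in circ _ n m return circ k m n with
  | c_gen _ _ g => c_op g
  | c_op _ _ g => c_gen g
  | c_id0 => c_id0 k
  | c_id1 => c_id1 k
  | c_sw => c_sw k
  | c_seq _ _ _ c1 c2 => c_seq (mirror c2) (mirror c1)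
  | c_par _ _ _ _ c1 c2 => c_par (mirror c1) (mirror c2)
  end.

Fixpoint cross a j : circ k (1 + (a + j)) (a + (1 + j)) :=
  match a return circ k (1 + (a + j)) (a + (1 + j)) with
  | 0 => id_circ (1 + j)
  | a'.+1 => c_seq (c_par (c_sw k) (id_circ (a' + j))) (c_par (id_circ 1) (cross a' j))
  end.

Definition uncross a j : circ k (a + (1 + j)) (1 + (a + j)) := mirror (cross a j).

Lemma sem_par_row n1 m1 n2 m2 (c1 : circ k n1 m1) (c2 : circ k n2 m2) u1 u2 w :
  sem (c_par c1 c2) (row_mx u1 u2) w <-> sem c1 u1 (lsubmx w) /\ sem c2 u2 (rsubmx w).
Proof. by rewrite /= row_mxKl row_mxKr. Qed.

Lemma sem_par_rows n1 m1 n2 m2 (c1 : circ k n1 m1) (c2 : circ k n2 m2) u1 u2 v1 v2 :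
  sem (c_par c1 c2) (row_mx u1 u2) (row_mx v1 v2) <-> sem c1 u1 v1 /\ sem c2 u2 v2.
Proof. by rewrite sem_par_row row_mxKl row_mxKr. Qed.

Lemma sem_seq_detl n m l (c1 : circ k n m) (c2 : circ k m l) u x w :
  (forall v, sem c1 u v <-> v = x) -> sem (c_seq c1 c2) u w <-> sem c2 x w.
Proof.
by move=> det_c1; split=> [[v [/det_c1 -> //]] | ?]; exists x; split=> //; exact/det_c1.
Qed.
Arguments sem_seq_detl {n m l c1 c2 u x w}.

Lemma sem_sw (a b : vec 1) w : sem (c_sw k) (row_mx a b) w <-> w = row_mx b a.
Proof. by rewrite rv2P /= row_mx_ord0 row_mx_ord_max. Qed.

Lemma sem_id_circ n (u v : vec n) : sem (id_circ n) u v <-> u = v.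
Proof.
elim: n u v => [|n IHn] u v //=.
split=> [[eq1 /IHn eq2] | ->]; last by split=> //; exact/IHn.
by rewrite -[u](@hsubmxK _ 1 1 n) -[v](@hsubmxK _ 1 1 n) eq1 eq2.
Qed.

Lemma sem_par_idr n1 m1 n2 (c : circ k n1 m1) (a : vec n1) (y : vec n2) w :
  sem (c_par c (id_circ n2)) (row_mx a y) w <-> exists2 b, w = row_mx b y & sem c a b.
Proof.
rewrite sem_par_row sem_id_circ.
split=> [[? ->] | [b -> ?]]; last by rewrite row_mxKl row_mxKr.
by exists (lsubmx w); rewrite ?hsubmxK.
Qed.

Lemma sem_par_idl n1 n2 m2 (c : circ k n2 m2) (x : vec n1) (a : vec n2) w :
  sem (c_par (id_circ n1) c) (row_mx x a) w <-> exists2 b, w = row_mx x b & sem c a b.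
Proof.
rewrite sem_par_row sem_id_circ.
split=> [[-> ?] | [b -> ?]]; last by rewrite row_mxKl row_mxKr.
by exists (rsubmx w); rewrite ?hsubmxK.
Qed.

Lemma sem_mirror n m (c : circ k n m) u v : sem (mirror c) u v <-> sem c v u.
Proof.
elim: c u v => //= [|||? ? ? c1 IH1 c2 IH2|? ? ? ? c1 IH1 c2 IH2] u v.
- by split=> ->.
- by split=> ->.
- by split=> -[-> ->].
- by split=> -[w [? ?]]; exists w; [rewrite -IH1 -IH2 | rewrite IH1 IH2].
- by rewrite IH1 IH2.
Qed.

Lemma sem_cross a j (p : vec 1) (x : vec a) (y : vec j) w :
  sem (cross a j) (row_mx p (row_mx x y)) w <-> w = row_mx x (row_mx p y).
Proof.
elim: a x w => [|a IHa] x w; first by rewrite sem_id_circ !row_thin_mx; split=> ->.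
rewrite -[x](@hsubmxK _ 1 1 a); set x1 := @lsubmx _ 1 1 a x; set x2 := @rsubmx _ 1 1 a x.
(* Sizes are explicit below: rewriting matches [2 + n] and [1 + (1 + n)] only syntactically. *)
have swap_p_x1 v :
    sem (c_par (c_sw k) (id_circ (a + j))) (row_mx p (row_mx (row_mx x1 x2) y)) v
    <-> v = row_mx x1 (row_mx p (row_mx x2 y)).
  have -> : row_mx p (row_mx (row_mx x1 x2) y)
            = @row_mx _ 1 2 (a + j) (row_mx p x1) (row_mx x2 y).
    by rewrite -(row_mxA1 x1 x2 y) (row_mxA1 p x1).
  rewrite sem_par_idr; split=> [[b -> /sem_sw ->] | ->]; first by rewrite -row_mxA1.
  by exists (row_mx x1 p); [rewrite row_mxA1 | exact/sem_sw].
rewrite (sem_seq_detl swap_p_x1) (@sem_par_idl 1 _ _ (cross a j)).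
split=> [[b -> /IHa ->] | ->]; first by rewrite row_mxA1.
by exists (row_mx x2 (row_mx p y)); rewrite ?IHa ?row_mxA1.
Qed.

Lemma sem_uncross a j (p : vec 1) (x : vec a) (y : vec j) w :
  sem (uncross a j) (row_mx x (row_mx p y)) w <-> w = row_mx p (row_mx x y).
Proof.
rewrite sem_mirror; split=> [| ->]; last exact/sem_cross.
rewrite -[w](@hsubmxK _ 1 1 (a + j)) -[rsubmx w]hsubmxK.
by move=> /sem_cross/eq_row_mx[<- /eq_row_mx[<- <-]].
Qed.

Definition thread_gen n m (g : gen k n m) : circ k (1 + n) (1 + m) :=
  match g in gen _ n m return circ k (1 + n) (1 + m) with
  | g_one => c_gen (g_copy k)
  | g => c_par (id_circ 1) (c_gen g)
  end.

Definition thread_par n1 m1 n2 m2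
    (d1 : circ k (1 + n1) (1 + m1)) (d2 : circ k (1 + n2) (1 + m2)) :
    circ k (1 + (n1 + n2)) (1 + (m1 + m2)) :=
  c_seq (c_par d1 (id_circ n2))
    (c_seq (cross m1 n2) (c_seq (c_par (id_circ m1) d2) (uncross m1 m2))).

Fixpoint thread n m (c : circ k n m) : circ k (1 + n) (1 + m) :=
  match c in circ _ n m return circ k (1 + n) (1 + m) with
  | c_gen _ _ g => thread_gen g
  | c_op _ _ g => mirror (thread_gen g)
  | c_id0 => c_id1 k
  | c_id1 => id_circ 2
  | c_sw => c_par (id_circ 1) (c_sw k)
  | c_seq _ _ _ c1 c2 => c_seq (thread c1) (thread c2)
  | c_par _ _ _ _ c1 c2 => thread_par (thread c1) (thread c2)
  end.

Definition carries_one n m (c : circ k n m) (d : circ k (1 + n) (1 + m)) : Prop :=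
  forall u w, sem d (row_mx one u) w <-> exists2 v, w = row_mx one v & sem c u v.

Lemma carries_one_par_id1 n m (c : circ k n m) : carries_one c (c_par (id_circ 1) c).
Proof. by move=> u w; rewrite sem_par_idl. Qed.

Lemma carries_one_gen n m (g : gen k n m) : carries_one (c_gen g) (thread_gen g).
Proof.
case: g => [||?||||]; try exact: carries_one_par_id1.
move=> u w; rewrite /= row_mx_ord0 one_ord0.
split=> [[w0 w1] | [v -> v1]]; last by rewrite row_mx_ord0 row_mx_ord_max v1 one_ord0.
by exists one; rewrite ?one_ord0 // rv2P w0 w1 one_ord0.
Qed.

Lemma carries_one_op n m (g : gen k n m) : carries_one (c_op g) (mirror (thread_gen g)).
Proof.
case: g => [||?||||]; try exact: carries_one_par_id1.
move=> u w; rewrite /= row_mx_ord0 row_mx_ord_max one_ord0.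
split=> [[w0 u1] | [v -> u1]]; last by rewrite row_mx_ord0 u1 one_ord0.
by exists 0; [apply/rv1P; rewrite row_mx_ord0 one_ord0 | rewrite u1 -w0].
Qed.

Lemma carries_one_seq n m l (c1 : circ k n m) (c2 : circ k m l) d1 d2 :
  carries_one c1 d1 -> carries_one c2 d2 -> carries_one (c_seq c1 c2) (c_seq d1 d2).
Proof.
move=> h1 h2 u w; split=> [[z [/h1[v1 -> s1] /h2[v -> s2]]] | [v -> [v1 [s1 s2]]]].
  by exists v; last exists v1.
by exists (row_mx one v1); split; [apply/h1; exists v1 | apply/h2; exists v].
Qed.

Lemma carries_one_par n1 m1 n2 m2 (c1 : circ k n1 m1) (c2 : circ k n2 m2) d1 d2 :
  carries_one c1 d1 -> carries_one c2 d2 -> carries_one (c_par c1 c2) (thread_par d1 d2).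
Proof.
move=> h1 h2 u w; rewrite -[u]hsubmxK row_mxA1.
set u1 := lsubmx u; set u2 := rsubmx u.
split=> [[z [/sem_par_idr[b1 -> /h1[v1 -> s1]]]] | [v ->]].
  rewrite -row_mxA1 => -[z' [/sem_cross -> [z'' [/sem_par_idl[b2 -> /h2[v2 -> s2]]]]]].
  by move/sem_uncross ->; exists (row_mx v1 v2); last exact/sem_par_rows.
rewrite -[v]hsubmxK => /sem_par_rows[s1 s2].
set v1 := lsubmx v in s1 *; set v2 := rsubmx v in s2 *.
exists (row_mx (row_mx one v1) u2); split.
  by apply/sem_par_idr; exists (row_mx one v1); last by apply/h1; exists v1.
exists (row_mx v1 (row_mx one u2)); split; first by rewrite -row_mxA1; apply/sem_cross.
exists (row_mx v1 (row_mx one v2)); split; last exact/sem_uncross.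
by apply/sem_par_idl; exists (row_mx one v2); last by apply/h2; exists v2.
Qed.

Lemma carries_one_thread n m (c : circ k n m) : carries_one c (thread c).
Proof.
elim: c => [> | > | | | | > h1 > h2 | > h1 > h2].
- exact: carries_one_gen.
- exact: carries_one_op.
- by move=> u w; split=> [<- | [v -> ->]] //; exists u.
- by move=> u w; rewrite sem_id_circ; split=> [<- | [v -> ->]]; first exists u.
- exact: carries_one_par_id1.
- exact: carries_one_seq.
- exact: carries_one_par.
Qed.

Definition one_free n m (c : circ k n m) : Prop :=
  count_one c = 0%N /\ count_one_op c = 0%N.

Lemma count_one_mirror n m (c : circ k n m) :
  count_one (mirror c) = count_one_op c /\ count_one_op (mirror c) = count_one c.
Proof.
elim: c => //= [> [-> ->] > [-> ->] | > [-> ->] > [-> ->]] //.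
by rewrite addnC [(count_one _ + _)%N]addnC.
Qed.

Lemma one_free_mirror n m (c : circ k n m) : one_free c -> one_free (mirror c).
Proof. by rewrite /one_free; case: (count_one_mirror c) => -> -> [-> ->]. Qed.

Lemma one_free_id_circ n : one_free (id_circ n).
Proof. by elim: n => //= n [-> ->]. Qed.

Lemma one_free_cross a j : one_free (cross a j).
Proof.
elim: a => [|a [IH1 IH2]]; first exact: one_free_id_circ.
by rewrite /one_free /= IH1 IH2; have [-> ->] := one_free_id_circ (a + j).
Qed.

Lemma one_free_thread n m (c : circ k n m) : one_free (thread c).
Proof.
rewrite /one_free.
elim: c => //= [? ? g | ? ? g | > [-> ->] > [-> ->] | n1 m1 n2 m2 > [-> ->] > [-> ->]] //.
- by case: g.
- by apply: one_free_mirror; case: g.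
have [-> ->] := one_free_id_circ n2; have [-> ->] := one_free_id_circ m1.
have [-> ->] := one_free_cross m1 n2.
by have [-> ->] := one_free_mirror (one_free_cross m1 m2).
Qed.

Definition single_one n m (c : circ k n m) : circ k n m :=
  c_seq (c_par (c_gen (g_one k)) (id_circ n))
    (c_seq (thread c) (c_par (c_gen (g_discard k)) (id_circ m))).

Lemma count_one_single_one n m (c : circ k n m) :
  count_one (single_one c) = 1%N /\ count_one_op (single_one c) = 0%N.
Proof.
rewrite /=; have [-> ->] := one_free_id_circ n; have [-> ->] := one_free_id_circ m.
by have [-> ->] := one_free_thread c.
Qed.

Lemma sem_one_par_id n (u : vec n) w :
  sem (c_par (c_gen (g_one k)) (id_circ n)) u w <-> w = row_mx one u.
Proof.
rewrite -{1}[u](row_thin_mx 0) sem_par_row sem_id_circ /=.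
split=> [[w0 ->] | ->]; last by rewrite row_mxKl row_mxKr one_ord0.
by rewrite -{1}[w]hsubmxK (_ : lsubmx w = one) //; apply/rv1P; rewrite w0 one_ord0.
Qed.

Lemma sem_discard_par_id m (a : vec 1) (v w : vec m) :
  sem (c_par (c_gen (g_discard k)) (id_circ m)) (row_mx a v) w <-> v = w.
Proof. by rewrite -{1}[w](row_thin_mx 0) sem_par_rows sem_id_circ /=; split=> [[] |]. Qed.

Lemma sem_single_one n m (c : circ k n m) u v : sem (single_one c) u v <-> sem c u v.
Proof.
rewrite (sem_seq_detl (sem_one_par_id u)).
split=> [[w [/carries_one_thread[v' -> s] /sem_discard_par_id <-]] // | s].
by exists (row_mx one v); split; [apply/carries_one_thread; exists v | exact/sem_discard_par_id].
Qed.

End OneWire.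

Theorem proposition12 (k : fieldType) (n m : nat) (c : circ k n m) :
  exists d : circ k n m,
    count_one d = 1%N /\ count_one_op d = 0%N /\
    (forall u v, sem c u v <-> sem d u v).
Proof.
exists (single_one c); have [-> ->] := count_one_single_one c.
by do 2!split=> //; move=> u v; rewrite sem_single_one.
Qed.
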